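(* Let $p\ge3$ and $h=\lfloor p/2\rfloor$. Let $m,s,n,j$ be integers and $B$ a real number. If $0\le m<n$, $0\le s<n$, $h+2<B$, and $l_\Gamma(t^{-m}a^jt^s)>Bn$, then $|j|>p^{(\frac{1}{h+2}B-2)n}$.
   Context: $G=BS(1,p)=\langle a,t\mid tat^{-1}=a^p\rangle$ with generating set $\{a^{\pm1},t^{\pm1}\}$; for a word $v$, $l_\Gamma(v)$ denotes the word length (length of a geodesic representative in the Cayley graph) of the element of $G$ represented by $v$. *)

(* Baumslag–Solitar group BS(1,p) = < a, t | t a t^-1 = a^p >
   defined literally by its presentation: words in {a^{±1}, t^{±1}} modulo the
   congruence generated by free cancellation and the defining relator. *)
From Stdlib Require Import Reals Lra Lia ZArith Arith List Classical ClassicalEpsilon Wf_nat Relations.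
Import ListNotations.
Open Scope R_scope.

Inductive gen : Type := GA | GAi | GT | GTi.

Definition ginv (x : gen) : gen :=
  match x with GA => GAi | GAi => GA | GT => GTi | GTi => GT end.

Definition word := list gen.

Inductive bs_step (p : nat) : word -> word -> Prop :=
| bs_free : forall (u v : word) (x : gen),
    bs_step p (u ++ x :: ginv x :: v) (u ++ v)
| bs_rel : forall (u v : word),
    bs_step p (u ++ [GT; GA; GTi] ++ v) (u ++ repeat GA p ++ v).

Definition bs_equiv (p : nat) : word -> word -> Prop :=
  clos_refl_sym_trans word (bs_step p).

Lemma wordlen_min_exists (p : nat) (v : word) :
  exists L : nat, (exists w, bs_equiv p v w /\ length w = L) /\
    forall w, bs_equiv p v w -> (L <= length w)%nat.
Proof.
  destruct (dec_inh_nat_subset_has_unique_least_element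
    (fun L => exists w, bs_equiv p v w /\ length w = L)) as [L [[HL Hmin] _]].
  - intros n; apply classic.
  - exists (length v); exists v; split; [apply rst_refl | reflexivity].
  - exists L; split; [exact HL|].
    intros w Hw; apply Hmin; exists w; split; auto.
Qed.

Definition word_length (p : nat) (v : word) : nat :=
  proj1_sig (constructive_indefinite_description _ (wordlen_min_exists p v)).

Definition apow (j : Z) : word :=
  if (0 <=? j)%Z then repeat GA (Z.to_nat j) else repeat GAi (Z.to_nat (- j)).

Definition tma_word (m j s : Z) : word :=
  repeat GTi (Z.to_nat m) ++ apow j ++ repeat GT (Z.to_nat s).

(* Expand j in balanced base p: j = d_0 + p d_1 + ... + p^(K-1) d_(K-1) + p^K q
   with |d_i| <= h, and |q| <= 1 once |j| <= p^K.  Since t a^q t^-1 = a^(pq), the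
   word a^(d_0) t a^(d_1) t ... t a^q t^-1 ... t^-1 represents a^j and has length
   at most (h+2)K + 1, so t^-m a^j t^s has length at most m + s + (h+2)K + 1.  If
   |j| <= p^x with x = (B/(h+2) - 2)n, taking K to be the ceiling of x makes this
   at most Bn. *)
From Stdlib Require Import Reals ZArith.
From Stdlib Require Import Lra Lia List Setoid Morphisms Relations.
Import ListNotations.
Open Scope R_scope.

Global Instance bs_equiv_Equivalence p : Equivalence (bs_equiv p).
Proof.
  constructor.
  - intros x; apply rst_refl.
  - intros x y H; apply rst_sym; exact H.
  - intros x y z H1 H2; eapply rst_trans; eauto.
Qed.

Lemma bs_step_app_ctx p x y u v :
  bs_step p u v -> bs_step p (x ++ u ++ y) (x ++ v ++ y).
Proof.
  intros [u0 v0 g | u0 v0].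
  - replace (x ++ (u0 ++ g :: ginv g :: v0) ++ y)
      with ((x ++ u0) ++ g :: ginv g :: (v0 ++ y))
      by (rewrite <- !app_assoc; reflexivity).
    replace (x ++ (u0 ++ v0) ++ y) with ((x ++ u0) ++ (v0 ++ y))
      by (rewrite <- !app_assoc; reflexivity).
    constructor.
  - replace (x ++ (u0 ++ [GT; GA; GTi] ++ v0) ++ y)
      with ((x ++ u0) ++ [GT; GA; GTi] ++ (v0 ++ y))
      by (rewrite <- !app_assoc; reflexivity).
    replace (x ++ (u0 ++ repeat GA p ++ v0) ++ y)
      with ((x ++ u0) ++ repeat GA p ++ (v0 ++ y))
      by (rewrite <- !app_assoc; reflexivity).
    constructor.
Qed.

Lemma bs_equiv_app_ctx p x y u v :
  bs_equiv p u v -> bs_equiv p (x ++ u ++ y) (x ++ v ++ y).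
Proof.
  induction 1.
  - apply rst_step, bs_step_app_ctx; assumption.
  - apply rst_refl.
  - apply rst_sym; assumption.
  - eapply rst_trans; eauto.
Qed.

Global Instance app_bs_equiv_Proper p :
  Proper (bs_equiv p ==> bs_equiv p ==> bs_equiv p) (@app gen).
Proof.
  intros a a' Ha b b' Hb.
  transitivity (a' ++ b).
  - exact (bs_equiv_app_ctx p [] b a a' Ha).
  - pose proof (bs_equiv_app_ctx p a' [] b b' Hb) as H.
    rewrite !app_nil_r in H. exact H.
Qed.

Global Instance cons_bs_equiv_Proper p x : Proper (bs_equiv p ==> bs_equiv p) (cons x).
Proof.
  intros a b H. change (x :: a) with ([x] ++ a). change (x :: b) with ([x] ++ b).
  rewrite H. reflexivity.
Qed.

Lemma bs_equiv_cancel p x w : bs_equiv p (x :: ginv x :: w) w.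
Proof. apply rst_step. exact (bs_free p [] w x). Qed.

Lemma bs_equiv_relator p : bs_equiv p [GT; GA; GTi] (repeat GA p).
Proof.
  apply rst_step. pose proof (bs_rel p [] []) as H. rewrite !app_nil_r in H. exact H.
Qed.

Lemma apow_succ p k : bs_equiv p (apow (k + 1)) (GA :: apow k).
Proof.
  unfold apow. destruct (Z.leb_spec 0 k).
  - rewrite (proj2 (Z.leb_le 0 (k + 1))) by lia.
    rewrite Z2Nat.inj_add, Nat.add_1_r by lia. reflexivity.
  - replace (Z.to_nat (- k)) with (S (Z.to_nat (- (k + 1)))) by lia. simpl.
    symmetry. rewrite (bs_equiv_cancel p GA).
    destruct (Z.leb_spec 0 (k + 1)).
    + replace (k + 1)%Z with 0%Z by lia. reflexivity.
    + reflexivity.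
Qed.

Lemma apow_pred p k : bs_equiv p (apow (k - 1)) (GAi :: apow k).
Proof.
  rewrite <- (bs_equiv_cancel p GAi (apow (k - 1))). simpl.
  rewrite <- apow_succ. replace (k - 1 + 1)%Z with k by ring. reflexivity.
Qed.

Lemma apow_add p a b : bs_equiv p (apow (a + b)) (apow a ++ apow b).
Proof.
  revert b. induction a using Z.peano_ind; intros b.
  - reflexivity.
  - rewrite <- Z.add_1_r. replace (a + 1 + b)%Z with (a + b + 1)%Z by ring.
    rewrite !apow_succ, IHa. reflexivity.
  - rewrite <- Z.sub_1_r. replace (a - 1 + b)%Z with (a + b - 1)%Z by ring.
    rewrite !apow_pred, IHa. reflexivity.
Qed.

Lemma length_apow j : length (apow j) = Z.to_nat (Z.abs j).
Proof. unfold apow. destruct (Z.leb_spec 0 j); rewrite repeat_length; lia. Qed.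

Definition tconj (w : word) : word := [GT] ++ w ++ [GTi].

Global Instance tconj_bs_equiv_Proper p : Proper (bs_equiv p ==> bs_equiv p) tconj.
Proof. intros a b H. unfold tconj. rewrite H. reflexivity. Qed.

Lemma length_tconj w : length (tconj w) = (length w + 2)%nat.
Proof. unfold tconj. rewrite !length_app. simpl. lia. Qed.

Lemma tconj_nil p : bs_equiv p (tconj []) [].
Proof. exact (bs_equiv_cancel p GT []). Qed.

Lemma tconj_app p u v : bs_equiv p (tconj (u ++ v)) (tconj u ++ tconj v).
Proof.
  replace (tconj u ++ tconj v) with ((GT :: u) ++ GTi :: ginv GTi :: (v ++ [GTi]))
    by (unfold tconj; simpl; rewrite <- !app_assoc; reflexivity).
  replace (tconj (u ++ v)) with ((GT :: u) ++ (v ++ [GTi]))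
    by (unfold tconj; simpl; rewrite <- !app_assoc; reflexivity).
  symmetry. apply rst_step. constructor.
Qed.

Lemma tconj_GA p : bs_equiv p (tconj [GA]) (apow (Z.of_nat p)).
Proof.
  unfold apow. rewrite (proj2 (Z.leb_le _ _)), Nat2Z.id by lia.
  apply bs_equiv_relator.
Qed.

Lemma tconj_GAi p : bs_equiv p (tconj [GAi]) (apow (- Z.of_nat p)).
Proof.
  transitivity (tconj [GAi] ++ apow (Z.of_nat p + - Z.of_nat p)).
  { rewrite Z.add_opp_diag_r, app_nil_r. reflexivity. }
  rewrite apow_add, <- tconj_GA, app_assoc, <- tconj_app.
  rewrite (bs_equiv_cancel p GAi [] : bs_equiv p [GAi; GA] []), tconj_nil.
  reflexivity.
Qed.

Lemma tconj_apow p q : bs_equiv p (tconj (apow q)) (apow (Z.of_nat p * q)).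
Proof.
  induction q using Z.peano_ind.
  - rewrite Z.mul_0_r. apply tconj_nil.
  - rewrite <- Z.add_1_r, apow_succ.
    change (GA :: apow q) with ([GA] ++ apow q).
    rewrite tconj_app, tconj_GA, IHq, <- apow_add.
    replace (Z.of_nat p + Z.of_nat p * q)%Z with (Z.of_nat p * (q + 1))%Z by ring.
    reflexivity.
  - rewrite <- Z.sub_1_r, apow_pred.
    change (GAi :: apow q) with ([GAi] ++ apow q).
    rewrite tconj_app, tconj_GAi, IHq, <- apow_add.
    replace (- Z.of_nat p + Z.of_nat p * q)%Z with (Z.of_nat p * (q - 1))%Z by ring.
    reflexivity.
Qed.

(* [j / p] rounded to the nearest integer, so the remainder [j - p * rdiv p j]
   lies in [-h, h]. *)
Definition rdiv (p : nat) (j : Z) : Z := ((j + Z.of_nat (Nat.div p 2)) / Z.of_nat p)%Z.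

Section Balanced.

Variable p : nat.
Hypothesis p_pos : (0 < p)%nat.

Let h : Z := Z.of_nat (Nat.div p 2).

Lemma half_bounds : (2 * h <= Z.of_nat p <= 2 * h + 1)%Z.
Proof.
  unfold h. rewrite Nat2Z.inj_div. change (Z.of_nat 2) with 2%Z.
  pose proof (Z.div_mod (Z.of_nat p) 2 ltac:(lia)).
  pose proof (Z.mod_pos_bound (Z.of_nat p) 2 ltac:(lia)). lia.
Qed.

Lemma rdiv_digit_bound j : (Z.abs (j - Z.of_nat p * rdiv p j) <= h)%Z.
Proof.
  pose proof half_bounds.
  unfold rdiv. fold h.
  pose proof (Z.div_mod (j + h) (Z.of_nat p) ltac:(lia)).
  pose proof (Z.mod_pos_bound (j + h) (Z.of_nat p) ltac:(lia)). lia.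
Qed.

Lemma rdiv_abs_le j X :
  (Z.abs j <= Z.of_nat p * X)%Z -> (Z.abs (rdiv p j) <= X)%Z.
Proof.
  intros Hj. pose proof half_bounds. pose proof (rdiv_digit_bound j).
  set (q := rdiv p j) in *.
  assert (Hpq : (Z.abs (Z.of_nat p * q) < Z.of_nat p * (X + 1))%Z) by lia.
  rewrite Z.abs_mul, (Z.abs_eq (Z.of_nat p)) in Hpq by lia.
  nia.
Qed.

End Balanced.

Fixpoint balanced_word (p K : nat) (j : Z) : word :=
  match K with
  | O => apow j
  | S K' => apow (j - Z.of_nat p * rdiv p j) ++ tconj (balanced_word p K' (rdiv p j))
  end.

Lemma balanced_word_equiv p K j : bs_equiv p (apow j) (balanced_word p K j).
Proof.
  revert j; induction K as [|K IHK]; intros j; simpl.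
  - reflexivity.
  - rewrite <- IHK, tconj_apow, <- apow_add, Z.sub_add. reflexivity.
Qed.

Lemma length_balanced_word p K j :
  (0 < p)%nat -> (Z.abs j <= Z.of_nat p ^ Z.of_nat K)%Z ->
  (Z.of_nat (length (balanced_word p K j))
     <= (Z.of_nat (Nat.div p 2) + 2) * Z.of_nat K + 1)%Z.
Proof.
  intros Hp. revert j; induction K as [|K IHK]; intros j Hj; cbn [balanced_word].
  - rewrite length_apow. simpl in Hj. lia.
  - rewrite Nat2Z.inj_succ, Z.pow_succ_r in Hj by lia.
    rewrite Nat2Z.inj_succ.
    specialize (IHK _ (rdiv_abs_le p Hp _ _ Hj)).
    pose proof (rdiv_digit_bound p Hp j).
    rewrite length_app, length_apow, length_tconj. lia.
Qed.

Lemma word_length_le_length p v w :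
  bs_equiv p v w -> (word_length p v <= length w)%nat.
Proof.
  intros Hvw. unfold word_length.
  match goal with |- (proj1_sig ?X <= _)%nat => destruct (proj2_sig X) as [_ HL] end.
  exact (HL w Hvw).
Qed.

Lemma word_length_tma_word_le p m j s K :
  (0 < p)%nat -> (0 <= m)%Z -> (0 <= s)%Z ->
  (Z.abs j <= Z.of_nat p ^ Z.of_nat K)%Z ->
  (Z.of_nat (word_length p (tma_word m j s))
     <= m + s + (Z.of_nat (Nat.div p 2) + 2) * Z.of_nat K + 1)%Z.
Proof.
  intros Hp Hm Hs Hj.
  pose proof (length_balanced_word p K j Hp Hj).
  assert (Hle : (word_length p (tma_word m j s) <=
    length (repeat GTi (Z.to_nat m) ++ balanced_word p K j ++ repeat GT (Z.to_nat s)))%nat).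
  { apply word_length_le_length, bs_equiv_app_ctx, balanced_word_equiv. }
  rewrite !length_app, !repeat_length in Hle. lia.
Qed.

Lemma nat_ceiling x : exists K : nat, x <= INR K /\ (K = 0%nat \/ INR K <= x + 1).
Proof.
  destruct (archimed x) as [Hgt Hle].
  destruct (Z_le_gt_dec (up x) 0) as [Hneg | Hpos].
  - exists 0%nat. split; [|now left].
    apply IZR_le in Hneg. simpl. lra.
  - exists (Z.to_nat (up x)). rewrite INR_IZR_INZ, Z2Nat.id by lia.
    split; [lra | right; lra].
Qed.

Lemma Zabs_le_pow_of_Rpower p j K x :
  (1 < p)%nat -> IZR (Z.abs j) <= Rpower (INR p) x -> x <= INR K ->
  (Z.abs j <= Z.of_nat p ^ Z.of_nat K)%Z.
Proof.
  intros Hp Hj HxK.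
  assert (HpR : 1 < INR p) by (apply (lt_INR 1); exact Hp).
  apply le_IZR. rewrite <- pow_IZR, <- INR_IZR_INZ, <- Rpower_pow by lra.
  eapply Rle_trans; [exact Hj|]. apply Rle_Rpower; lra.
Qed.

Theorem lemma6p3 (p : nat) (m s n j : Z) (B : R) :
  (3 <= p)%nat ->
  (0 <= m < n)%Z ->
  (0 <= s < n)%Z ->
  INR (Nat.div p 2) + 2 < B ->
  INR (word_length p (tma_word m j s)) > B * IZR n ->
  IZR (Z.abs j) >
    Rpower (INR p) ((B / (INR (Nat.div p 2) + 2) - 2) * IZR n).
Proof.
  intros Hp Hm Hs HB Hwl.
  apply Rnot_le_gt; intro Hj.
  set (h := Nat.div p 2) in *.
  set (x := (B / (INR h + 2) - 2) * IZR n) in *.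
  destruct (nat_ceiling x) as [K [HxK HK]].
  pose proof (word_length_tma_word_le p m j s K ltac:(lia) ltac:(lia) ltac:(lia)
    (Zabs_le_pow_of_Rpower p j K x ltac:(lia) Hj HxK)) as Hlen.
  fold h in Hlen. apply IZR_le in Hlen.
  rewrite <- INR_IZR_INZ, !plus_IZR, mult_IZR, plus_IZR, <- !INR_IZR_INZ in Hlen.
  assert (Hm' : IZR m <= IZR n - 1) by (rewrite <- minus_IZR; apply IZR_le; lia).
  assert (Hs' : IZR s <= IZR n - 1) by (rewrite <- minus_IZR; apply IZR_le; lia).
  assert (Hm0 : 0 <= IZR m) by (apply IZR_le; lia).
  assert (Hs0 : 0 <= IZR s) by (apply IZR_le; lia).
  assert (Hn1 : 1 <= IZR n) by (apply IZR_le; lia).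
  assert (Hh0 : 0 <= INR h) by apply pos_INR.
  assert (Hx : (INR h + 2) * x = (B - 2 * (INR h + 2)) * IZR n)
    by (unfold x; field; lra).
  destruct HK as [-> | HK].
  - rewrite INR_0 in Hlen. nra.
  - assert ((INR h + 2) * INR K <= (INR h + 2) * (x + 1))
      by (apply Rmult_le_compat_l; lra).
    assert (0 <= INR h * (IZR n - 1)) by (apply Rmult_le_pos; lra).
    nra.
Qed.
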